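(* Let $K$ and $L$ be fields and let $\sigma_1,\ldots,\sigma_n\colon K\to L$ be field monomorphisms. Suppose that $$\sum_{g\in S_n}\prod_{i=1}^n\sigma_{g(i)}(x_i)=0\quad\text{for all }x_1,\ldots,x_n\in K.$$ Then $\operatorname{char}K=p>0$ and there exist indices $1\le i_1<\cdots<i_p\le n$ with $\sigma_{i_1}=\cdots=\sigma_{i_p}$. *)

From HB Require Import structures.
From mathcomp Require Import all_boot all_order all_algebra all_fingroup.
Set Implicit Arguments. Unset Strict Implicit. Unset Printing Implicit Defensive.

From mathcomp Require Import all_boot all_order all_algebra all_fingroup all_solvable.
From Stdlib Require Import ClassicalEpsilon Classical.
From mathcomp Require Import ring.

Set Implicit Arguments.
Unset Strict Implicit.
Unset Printing Implicit Defensive.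
Import GRing.Theory.
Local Open Scope ring_scope.

(* For g in S_n let chi_g(x) := prod_i sigma_(g i)(x_i); each
   chi_g is a multiplicative map from the monoid K^n (pointwise product) to L.
   1. Artin's lemma on independence of characters, in its "grouped" form: if
      sum_g a_g chi_g = 0 identically, then the a_g summed over any class of
      equal characters vanish ([artin_class_sum]).
   2. chi_g = chi_1 exactly when g lies in the stabiliser H of the family
      sigma, i.e. sigma_(g i) = sigma_i for all i; H is a subgroup of S_n.
      With all a_g = 1, step 1 gives #|H| = 0 in L ([card_sigma_stab_eq0]).
   3. Hence char L = p > 0 and p divides #|H|; by Cauchy, H has an element g
      of order p.  Some point i is moved by g, so its <[g]>-orbit has exactly
      p elements ([card_orbit_prime_order]), and sigma is constant on it.
   4. Listing that orbit in increasing order gives the indices; char K = p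
      because field morphisms preserve the characteristic. *)

Definition classicb (P : Prop) : bool :=
  if excluded_middle_informative P then true else false.

Lemma classicbP (P : Prop) : reflect P (classicb P).
Proof. by rewrite /classicb; case: excluded_middle_informative => h; constructor. Qed.

(* Induction on the support
   of the coefficients: a coefficient outside the class of j is killed by
   combining the relation with its translate by a separating point y. *)
Lemma artin_class_sum (L : fieldType) (M : Type) (mul : M -> M -> M) (e : M)
    (I : finType) (chi : I -> M -> L)
    (chiM : forall i x y, chi i (mul x y) = chi i x * chi i y)
    (chi1 : forall i, chi i e = 1) (a : I -> L) :
  (forall x, \sum_i a i * chi i x = 0) ->
  forall j, \sum_(i | classicb (chi i =1 chi j)) a i = 0.
Proof.
move=> rel j; have [N] := ubnP #|[set i | a i != 0]|.
elim: N a rel => // N IH a rel supp_lt.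
case: (pickP [pred k | (a k != 0) && ~~ classicb (chi k =1 chi j)]) => [k|inclass].
  case/andP=> ak_neq0 /classicbP chik_neq.
  have [y chiky] : exists y, chi j y != chi k y.
    apply: NNPP => none; apply: chik_neq => x.
    by case: (eqVneq (chi k x) (chi j x)) => // ne; case: none; exists x; rewrite eq_sym.
  (* subtracting chi_k(y) times the relation from its translate by y *)
  pose b i := a i * (chi i y - chi k y).
  have relb x : \sum_i b i * chi i x = 0.
    transitivity (\sum_i a i * chi i (mul y x) - chi k y * \sum_i a i * chi i x).
      by rewrite mulr_sumr -sumrB; apply: eq_bigr => i _; rewrite chiM /b; ring.
    by rewrite !rel mulr0 subr0.
  have supp_b : [set i | b i != 0] \subset [set i | a i != 0] :\ k.
    apply/subsetP => i; rewrite !inE /b mulf_eq0 negb_or subr_eq0.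
    by case/andP=> -> ne; rewrite andbT; apply: contraNneq ne => ->.
  have sum_b := IH b relb (leq_ltn_trans (subset_leq_card supp_b) _).
  rewrite (cardsD1 k) inE ak_neq0 /= in supp_lt; have {}sum_b := sum_b supp_lt.
  move: sum_b; rewrite (eq_bigr (fun i => a i * (chi j y - chi k y))); last first.
    by move=> i /classicbP chiij; rewrite /b chiij.
  by rewrite -mulr_suml => /eqP; rewrite mulf_eq0 subr_eq0 (negbTE chiky) orbF => /eqP.
(* all nonzero coefficients lie in the class of j: evaluate at e *)
rewrite -[RHS](rel e) [RHS](bigID (fun i => classicb (chi i =1 chi j))) /=.
rewrite [X in _ = _ + X]big1 ?addr0 => [|i not_ij]; last first.
  by have := inclass i; rewrite /= not_ij andbT => /negbFE/eqP ->; rewrite mul0r.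
by apply: eq_bigr => i _; rewrite chi1 mulr1.
Qed.

(* A permutation of prime order moving x has an orbit through x of exactly
   that size, since the orbit length divides the order and is not 1. *)
Lemma card_orbit_prime_order (T : finType) (g : {perm T}) (x : T) :
  prime #[g]%g -> g x != x -> #|orbit 'P <[g]> x| = #[g]%g.
Proof.
move=> pr_g gx_neq; case/primeP: pr_g => _ /(_ _ (dvdn_orbit 'P _ x)) /orP[] /eqP //.
move=> /card_orbit1 orbit_x.
have : g x \in orbit 'P <[g]> x by rewrite -apermE; apply: mem_orbit; apply: cycle_id.
by rewrite orbit_x => /set1P gx; rewrite gx eqxx in gx_neq.
Qed.

Lemma sorted_enum_ord n (O : {set 'I_n}) : sorted (fun a b : 'I_n => (a < b)%N) (enum O).
Proof.
rewrite /enum_mem -enumT; apply: sorted_filter; first exact: ltn_trans.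
by have := iota_ltn_sorted 0 n; rewrite -val_enum_ord sorted_map.
Qed.

Lemma increasing_enum n p (O : {set 'I_n}) : #|O| = p ->
  exists s : 'I_p -> 'I_n,
    (forall j k : 'I_p, (j < k)%N -> (s j < s k)%N) /\ (forall j, s j \in O).
Proof.
move=> cardO; exists (fun j => enum_val (cast_ord (esym cardO) j)).
split=> [j k jk|j]; last exact: enum_valP.
pose x0 := enum_val (cast_ord (esym cardO) j); rewrite !(enum_val_nth x0) /=.
apply: (sorted_ltn_nth (leT := fun a b : 'I_n => (a < b)%N)) => //.
- exact: ltn_trans.
- exact: sorted_enum_ord.
- by rewrite inE -cardE cardO.
- by rewrite inE -cardE cardO.
Qed.

Section PermutedProducts.

Variables (K L : fieldType) (n : nat) (sigma : 'I_n -> {rmorphism K -> L}).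

Definition perm_prod (g : 'S_n) (x : 'I_n -> K) : L := \prod_(i < n) sigma (g i) (x i).

Lemma perm_prodM (g : 'S_n) (x y : 'I_n -> K) :
  perm_prod g (fun i => x i * y i) = perm_prod g x * perm_prod g y.
Proof. by rewrite /perm_prod -big_split; apply: eq_bigr => i _; rewrite rmorphM. Qed.

Lemma perm_prod1 (g : 'S_n) : perm_prod g (fun _ => 1) = 1.
Proof. by rewrite /perm_prod big1 // => i _; rewrite rmorph1. Qed.

Definition sigma_stab : {set 'S_n} :=
  [set g : 'S_n | [forall i, classicb (sigma (g i) =1 sigma i)]].

Lemma sigma_stabP (g : 'S_n) : reflect (forall i, sigma (g i) =1 sigma i) (g \in sigma_stab).
Proof. by rewrite inE; apply: (iffP forallP) => h i; apply/classicbP. Qed.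

Lemma group_set_sigma_stab : group_set sigma_stab.
Proof.
apply/group_setP; split; first by apply/sigma_stabP => i x; rewrite perm1.
by move=> g h /sigma_stabP sg /sigma_stabP sh; apply/sigma_stabP => i x; rewrite permM sh sg.
Qed.

Canonical sigma_stab_group := Group group_set_sigma_stab.

(* chi_g = chi_1 exactly on the stabiliser; test chi_g on vectors that are 1
   outside a single coordinate. *)
Lemma perm_prod_eq1 (g : 'S_n) : perm_prod g =1 perm_prod 1 <-> g \in sigma_stab.
Proof.
split=> [eq_g|/sigma_stabP sg x]; last by apply: eq_bigr => i _; rewrite perm1 sg.
apply/sigma_stabP => i t; have := eq_g (fun k => if k == i then t else 1).
have single (h : 'S_n) : perm_prod h (fun k => if k == i then t else 1) = sigma (h i) t.
  rewrite /perm_prod (bigD1 i) //= eqxx big1 ?mulr1 // => k /negbTE ->.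
  by rewrite rmorph1.
by rewrite !single perm1.
Qed.

Lemma card_sigma_stab_eq0 :
  (forall x, \sum_(g : 'S_n) perm_prod g x = 0) -> (#|sigma_stab|%:R : L) = 0.
Proof.
move=> rel; have rel1 x : \sum_(g : 'S_n) 1 * perm_prod g x = 0.
  by rewrite -[RHS](rel x); apply: eq_bigr => g _; rewrite mul1r.
rewrite -(artin_class_sum perm_prodM perm_prod1 rel1 1%g) -sumr_const.
by apply: eq_bigl => g; apply/idP/classicbP => /perm_prod_eq1.
Qed.

End PermutedProducts.

Theorem lemma3p1 (K L : fieldType) (n : nat) (sigma : 'I_n -> {rmorphism K -> L})
  (Hsum : forall x : 'I_n -> K,
     \sum_(g : 'S_n) \prod_(i < n) sigma (g i) (x i) = 0) :
  exists p : nat, [/\ prime p, p \in [pchar K] &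
    exists s : 'I_p -> 'I_n,
      (forall j k : 'I_p, (j < k)%N -> (s j < s k)%N) /\
      (forall j k : 'I_p, sigma (s j) =1 sigma (s k))].
Proof.
pose H := sigma_stab_group sigma.
have stab0 : (#|H|%:R : L) = 0 := card_sigma_stab_eq0 Hsum.
have [p charLp] : exists p, p \in [pchar L].
  by apply: (natf0_pchar (cardG_gt0 H)); apply/eqP.
have pr_p := pcharf_prime charLp.
have p_dvd : (p %| #|H|)%N by rewrite (dvdn_pcharf charLp) stab0.
have [g gH ord_g] := Cauchy pr_p p_dvd.
have [i gi] : exists i, g i != i.
  apply/existsP; apply: contraT => /existsPn fix_g.
  have g1 : g = 1%g by apply/permP => i; rewrite perm1; apply/eqP/negPn/fix_g.
  by move: pr_p; rewrite -ord_g g1 order1.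
pose O := orbit 'P <[g]> i.
have const_O j : j \in O -> sigma j =1 sigma i.
  case/orbitP => h hg <-; have hH : h \in H by apply: (subsetP _ h hg); rewrite cycle_subG.
  by move/sigma_stabP: hH; rewrite /= apermE.
have card_O : #|O| = p by rewrite -ord_g card_orbit_prime_order // ord_g.
have [s [s_incr s_in]] := increasing_enum card_O.
exists p; split=> //; first by rewrite -(fmorph_pchar (sigma i)).
by exists s; split=> // j k x; rewrite (const_O _ (s_in j)) (const_O _ (s_in k)).
Qed.
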